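(* Assume that for every $k=2,\dots,t$ the matrix $U^{(k)}$ is nonsingular. Then for every $k=1,\dots,t$ and every $j$ with $0\le j<\deg P^{(k)}_2$, $$\tilde S_{k,j}(F,G)=(\hat R_{k-1}\hat B_{k-1})^{J_{k,j}}\,\hat B_{k,j}\,\hat S_{k,j}(F,G).$$
   Context: Let $K$ be a field of characteristic zero; $|M|$ denotes the determinant of a square matrix $M$; $\deg$ denotes degree. Subresultant matrices. Let $A=a_px^p+\dots+a_0$, $B=b_qx^q+\dots+b_0$ over $K$ regarded with formal degrees $p\ge q>0$. For $0\le j<q$, $N^{(j)}(A,B)$ is the $(p+q-j)\times(p+q-2j)$ matrix whose $c$-th column ($c=1,\dots,q-j$) has $a_p,\dots,a_0$ in rows $c,\dots,c+p$ and zeros elsewhere, and whose $(q-j+c)$-th column ($c=1,\dots,p-j$) has $b_q,\dots,b_0$ in rows $c,\dots,c+q$ and zeros elsewhere. PRS. For nonzero $A,B\in K[x]$, $\deg A>\deg B$, a PRS is $(P_1,\dots,P_l)$, nonzero polynomials, $P_1=A$, $P_2=B$, $\deg P_{i-1}>\deg P_i$, $\alpha_iP_{i-2}=q_{i-1}P_{i-1}+\beta_iP_i$ ($i=3,\dots,l$) with $\alpha_i,\beta_i\in K\setminus\{0\}$, $q_{i-1}\in K[x]$, and $P_l=\gamma\gcd(A,B)$, $0\ne\gamma\in K$. Recursive PRS. $F=f_mx^m+\dots+f_0$, $G=g_nx^n+\dots+g_0\in K[x]$, $f_mg_n\ne0$, $m>n>0$. A complete recursive PRS consists of PRSs $(P^{(k)}_1,\dots,P^{(k)}_{l_k})$,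 $k=1,\dots,t$, $P^{(1)}_1=F$, $P^{(1)}_2=G$, for $k\ge2$ $P^{(k)}_1=P^{(k-1)}_{l_{k-1}}$, $P^{(k)}_2=\frac d{dx}P^{(k)}_1$; $P^{(k)}_{l_k}$ non-constant for $k<t$, $P^{(t)}_{l_t}$ constant. Assume $l_k\ge3$ for $k<t$. Notation: $n^{(k)}_i=\deg P^{(k)}_i$, $j_0=m$, $j_k=n^{(k)}_{l_k}$ (so $n^{(k)}_1=j_{k-1}$, $n^{(k)}_2=j_{k-1}-1$ for $k\ge2$). Nested subresultants ($0\le j<n^{(k)}_2$): $\tilde N^{(1,j)}=N^{(j)}(F,G)$; for $k\ge2$, $\tilde N^{(k,j)}=N^{(j)}\big(\tilde S_{k-1,j_{k-1}}(F,G),\frac d{dx}\tilde S_{k-1,j_{k-1}}(F,G)\big)$ with formal degrees $j_{k-1}$, $j_{k-1}-1$; $\tilde N^{(k,j)}_\tau$ ($\tau=0,\dots,j$) is formed by the top $n^{(k)}_1+n^{(k)}_2-2j-1$ rows and the $(n^{(k)}_1+n^{(k)}_2-j-\tau)$-th row of $\tilde N^{(k,j)}$, and $\tilde S_{k,j}(F,G)=\sum_{\tau=0}^j|\tilde N^{(k,j)}_\tau|x^\tau$. Reduced nested subresultants ($0\le j<n^{(k)}_2$). Set $J_{1,j}=m+n-2j$ and, for $k\ge2$, $I_{k,j}=2j_{k-1}-j-1$, $J_{k,j}=2j_{k-1}-2j-1$. $\hat N^{(1,j)}=N^{(j)}(F,G)$. For $k\ge2$, let $\hat N=\hat N^{(k-1,j_{k-1})}$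 with $J'$ columns; let $\hat N_U$ be $\hat N$ with its bottom $j_{k-1}+1$ rows deleted, written $\hat N_U=(U^{(k)}\mid\mathbf v^{(k)})$ with $U^{(k)}$ square and $\mathbf v^{(k)}$ a column, and let $\hat N_L$ be the bottom $j_{k-1}+1$ rows of $\hat N$, with rows $\boldsymbol\rho_1,\dots,\boldsymbol\rho_{j_{k-1}+1}$. For $\tau=0,\dots,j_{k-1}$, $\hat A_\tau=|\hat N_\tau|$ where $\hat N_\tau$ is $\hat N_U$ with $\boldsymbol\rho_{j_{k-1}-\tau+1}$ appended as last row; $\hat A(x)=\sum_\tau\hat A_\tau x^\tau$, and $H^{(k,j)}=N^{(j)}(\hat A(x),\frac d{dx}\hat A(x))$ with formal degrees $j_{k-1}$, $j_{k-1}-1$ (size $I_{k,j}\times J_{k,j}$). For each position $(p,q)$ define a row vector $\mathbf w_{p,q}$ of length $J'$: if $q\le j_{k-1}-1-j$ and $0\le p-q\le j_{k-1}$, $\mathbf w_{p,q}=\boldsymbol\rho_{p-q+1}$; if $q=j_{k-1}-1-j+q'$ with $1\le q'\le j_{k-1}-j$ and $0\le p-q'\le j_{k-1}-1$, $\mathbf w_{p,q}=(j_{k-1}-p+q')\boldsymbol\rho_{p-q'+1}$; otherwise $\mathbf w_{p,q}=\mathbf 0$ (so the $(p,q)$ entry of $H^{(k,j)}$ equals the determinant of $\hat N_U$ with $\mathbf w_{p,q}$ appended, or $0$). Write $\mathbf w_{p,q}=(\mathbf b_{p,q}\mid g_{p,q})$, $g_{p,q}$ its last entry; with $U^{(k)}$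 nonsingular let $\mathbf x_{p,q}U^{(k)}=-\mathbf b_{p,q}$ and $h^{(k,j)}_{p,q}=g_{p,q}+\mathbf x_{p,q}\mathbf v^{(k)}$. Then $\hat N^{(k,j)}=(h^{(k,j)}_{p,q})_{p\le I_{k,j},\,q\le J_{k,j}}$. For $\tau=0,\dots,j$, $\hat N^{(k,j)}_\tau$ is formed by the top $n^{(k)}_1+n^{(k)}_2-2j-1$ rows and the $(n^{(k)}_1+n^{(k)}_2-j-\tau)$-th row of $\hat N^{(k,j)}$, and $\hat S_{k,j}(F,G)=\sum_{\tau=0}^j|\hat N^{(k,j)}_\tau|x^\tau$. Constants. $\hat B_{1,j}=1$ and $\hat B_{k,j}=|U^{(k)}|^{J_{k,j}}$ for $k\ge2$; $\hat B_0=\hat B_1=1$, $\hat B_k=\hat B_{k,j_k}$ for $k\ge2$; $\hat R_0=\hat R_1=1$, $\hat R_k=(\hat R_{k-1}\hat B_{k-1})^{J_{k,j_k}}$ for $k\ge2$. *)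

From HB Require Import structures.
From mathcomp Require Import all_boot all_order all_algebra.
Set Implicit Arguments. Unset Strict Implicit. Unset Printing Implicit Defensive.
Import GRing.Theory.
Local Open Scope ring_scope.

(* degree of a polynomial (deg 0 = 0 by convention; only used on nonzero polys) *)
Definition deg (K : fieldType) (p : {poly K}) : nat := (size p).-1.

(* Matrices are represented as functions nat -> nat -> K, 0-indexed
   (row r, column c), together with explicit dimensions. *)

(* N^{(j)}(A,B) with formal degrees p, q (0-indexed entries). Column c
   (0-indexed, c < q-j) has a_p,...,a_0 in rows c..c+p; column (q-j)+c'
   (c' < p-j) has b_q,...,b_0 in rows c'..c'+q. *)
Definition subres_fun (K : fieldType) (A B : {poly K}) (p q j : nat)
  : nat -> nat -> K :=
  fun r c =>
    if (c < q - j)%N then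
      (if (c <= r <= c + p)%N then A`_(p - (r - c))%N else 0)
    else
      let c' := (c - (q - j))%N in
      if (c' < p - j)%N then
        (if (c' <= r <= c' + q)%N then B`_(q - (r - c'))%N else 0)
      else 0.

Definition detf (K : fieldType) (n : nat) (f : nat -> nat -> K) : K :=
  \det (\matrix_(i < n, l < n) f i l).

(* Given an nr x nc matrix M (nr = nc + j), the polynomial
   sum_{tau=0}^{j} |M_tau| x^tau where M_tau consists of the top nc-1 rows
   and the (nr - tau)-th row (1-indexed) of M. *)
Definition polydet (K : fieldType) (M : nat -> nat -> K) (nr nc j : nat)
  : {poly K} :=
  \poly_(tau < j.+1)
     detf nc (fun r c => if (r < nc.-1)%N then M r c
                         else M (nr.-1 - tau)%N c).

(* Nested subresultants: tS F G js k j = \tilde S_{k,j}(F,G), where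
   js k = j_k (js 0 = m = deg F). Only meaningful for k >= 1. *)
Fixpoint tS (K : fieldType) (F G : {poly K}) (js : nat -> nat) (k j : nat)
  {struct k} : {poly K} :=
  match k with
  | 0 => 0
  | k'.+1 =>
    if k' is 0 then
      polydet (subres_fun F G (deg F) (deg G) j)
              (deg F + deg G - j) (deg F + deg G - 2 * j) j
    else
      let a := js k' in
      let P := tS F G js k' a in
      polydet (subres_fun P P^`() a a.-1 j)
              (a + a.-1 - j) (a + a.-1 - 2 * j) j
  end.

(* Number of rows I_{k,j} and columns J_{k,j} of \hat N^{(k,j)}
   (for k = 1: m+n-j rows and J_{1,j} = m+n-2j columns). *)
Definition rowsH (K : fieldType) (F G : {poly K}) (js : nat -> nat) (k j : nat)
  : nat :=
  if (k <= 1)%N then (deg F + deg G - j)%N else (2 * js k.-1 - j - 1)%N.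
Definition colsH (K : fieldType) (F G : {poly K}) (js : nat -> nat) (k j : nat)
  : nat :=
  if (k <= 1)%N then (deg F + deg G - 2 * j)%N
  else (2 * js k.-1 - 2 * j - 1)%N.

(* U^{(k)} built from the previous matrix \hat N (with J' columns) *)
Definition Umat_of (K : fieldType) (Nprev : nat -> nat -> K) (J' : nat)
  : 'M[K]_(J'.-1) :=
  \matrix_(i < J'.-1, l < J'.-1) Nprev i l.
Definition vcol_of (K : fieldType) (Nprev : nat -> nat -> K) (J' : nat)
  : 'cV[K]_(J'.-1) :=
  \col_(i < J'.-1) Nprev i J'.-1.

(* the row vector w_{p,q} (1-indexed p, q), as a function of the column
   index l (0-indexed, l < J'); a = j_{k-1}.  rho_i (1-indexed) is row
   J'-1 + (i-1) (0-indexed) of Nprev. *)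
Definition w_of (K : fieldType) (Nprev : nat -> nat -> K) (J' a j p q : nat)
  : nat -> K :=
  fun l =>
    if [&& (q <= a.-1 - j)%N, (q <= p)%N & (p - q <= a)%N] then
      Nprev (J'.-1 + (p - q))%N l
    else
      let q' := (q - (a.-1 - j))%N in
      if [&& (a.-1 - j < q)%N, (q' <= a - j)%N, (q' <= p)%N & (p - q' <= a.-1)%N]
      then (a + q' - p)%:R * Nprev (J'.-1 + (p - q'))%N l
      else 0.

(* h_{p,q} = g_{p,q} + x_{p,q} v, with x_{p,q} U = - b_{p,q} *)
Definition hat_step (K : fieldType) (Nprev : nat -> nat -> K) (J' a j : nat)
  : nat -> nat -> K :=
  fun p0 q0 =>
    let w := w_of Nprev J' a j p0.+1 q0.+1 in
    let b := \row_(l < J'.-1) w l in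
    let g := w J'.-1 in
    let x := - b *m invmx (Umat_of Nprev J') in
    g + (x *m vcol_of Nprev J') 0 0.

Fixpoint hatN (K : fieldType) (F G : {poly K}) (js : nat -> nat) (k j : nat)
  {struct k} : nat -> nat -> K :=
  match k with
  | 0 => fun _ _ => 0
  | k'.+1 =>
    if k' is 0 then subres_fun F G (deg F) (deg G) j
    else
      let a := js k' in
      hat_step (hatN F G js k' a) (colsH F G js k' a) a j
  end.

Definition Umat (K : fieldType) (F G : {poly K}) (js : nat -> nat) (k : nat) :=
  Umat_of (hatN F G js k.-1 (js k.-1)) (colsH F G js k.-1 (js k.-1)).

Definition hatS (K : fieldType) (F G : {poly K}) (js : nat -> nat) (k j : nat)
  : {poly K} :=
  polydet (hatN F G js k j) (rowsH F G js k j) (colsH F G js k j) j.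

Definition hatBkj (K : fieldType) (F G : {poly K}) (js : nat -> nat) (k j : nat)
  : K :=
  if (k <= 1)%N then 1 else (\det (Umat F G js k)) ^+ colsH F G js k j.
Definition hatBk (K : fieldType) (F G : {poly K}) (js : nat -> nat) (k : nat)
  : K :=
  if (k <= 1)%N then 1 else hatBkj F G js k (js k).
Fixpoint hatRk (K : fieldType) (F G : {poly K}) (js : nat -> nat) (k : nat)
  {struct k} : K :=
  match k with
  | 0 => 1
  | k'.+1 =>
    if k' is 0 then 1
    else (hatRk F G js k' * hatBk F G js k') ^+ colsH F G js k (js k)
  end.

(* Polynomial remainder sequences (1-indexed P_1..P_l stored 0-indexed). *)
Definition is_PRS (K : fieldType) (A B : {poly K}) (P : seq {poly K}) : Prop :=
  [/\ (2 <= size P)%N, P`_0 = A /\ P`_1 = B,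
     ((forall i, (i < size P)%N -> P`_i != 0) /\
     (forall i, (i.+1 < size P)%N -> (deg (nth 0%R P i.+1) < deg (nth 0%R P i))%N)),
     (forall i, (i.+2 < size P)%N ->
        exists (al be : K) (q : {poly K}),
          ([/\ al != 0, be != 0 & al *: P`_i = q * P`_(i.+1) + be *: P`_(i.+2)])) &
     (exists2 ga : K, ga != 0 & last 0 P = ga *: gcdp A B)].

(* Complete recursive PRS (P^{(k)})_{k=1..t}, given by Ps k for 1 <= k <= t,
   including the standing assumption l_k >= 3 for k < t. *)
Definition is_complete_rec_PRS (K : fieldType) (F G : {poly K}) (t : nat)
  (Ps : nat -> seq {poly K}) : Prop :=
  [/\ (1 <= t)%N,
     (forall k, (1 <= k <= t)%N -> is_PRS (Ps k)`_0 (Ps k)`_1 (Ps k)) /\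
     ((Ps 1%N)`_0 = F /\ (Ps 1%N)`_1 = G),
     (forall k, (2 <= k <= t)%N ->
        (Ps k)`_0 = last 0%R (Ps k.-1) /\ (Ps k)`_1 = ((Ps k)`_0)^`()),
     (forall k, (1 <= k < t)%N ->
        (0 < deg (last 0%R (Ps k)))%N /\ (3 <= size (Ps k))%N) &
     deg (last 0%R (Ps t)) = 0%N].

Definition jseq (K : fieldType) (F : {poly K}) (Ps : nat -> seq {poly K})
  (k : nat) : nat :=
  if k is 0 then deg F else deg (last 0%R (Ps k)).

Definition n2 (K : fieldType) (F G : {poly K}) (Ps : nat -> seq {poly K})
  (k : nat) : nat :=
  if (k <= 1)%N then deg G else (jseq F Ps k.-1).-1.

From HB Require Import structures.
From mathcomp Require Import all_boot all_order all_algebra zify.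
Import GRing.Theory.
Set Implicit Arguments. Unset Strict Implicit. Unset Printing Implicit Defensive.
Local Open Scope ring_scope.

(* The proof is an induction on k driven by one determinant identity.  Write
   P := S~_{k,j_k}; by induction P = c * A^(x), where A^ is the polynomial of
   bordered determinants |N^_U ; rho_i| of the previous reduced matrix N^.
   Expanding such a bordered determinant through the Schur complement of its
   top-left block U (det_bordered) gives |N^_U ; w| = |U| * h(w), where
   h(w) = g + x v with x U = -b is exactly the reduction map producing the
   entries h_{p,q} of N^^{(k+1,j)}; h is linear in the appended row w.  Hence
   every entry of the subresultant matrix N^{(j)}(P, P') equals c |U| times
   the matching entry of N^^{(k+1,j)} (subres_deriv_entry), and pulling the
   common factor out of the J_{k+1,j} columns of each minor gives
   S~_{k+1,j} = (c |U|)^{J_{k+1,j}} S^_{k+1,j} (tS_hatS_succ).  The constants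
   then telescope into R^ and B^ (hat_coef_at_jk); the dimension bookkeeping
   uses j_k < n_2^{(k)}, a consequence of the degrees decreasing along each
   PRS (jseq_lt_n2). *)

(* The Schur-complement entry of a bordered determinant: the rows 0..n-1 of N
   form (U | v) with U the top-left n x n block, and w is an appended row. *)
Section BorderedDeterminant.
Variables (K : fieldType) (N : nat -> nat -> K) (n : nat).

Local Notation U := (Umat_of N n.+1).
Local Notation v := (vcol_of N n.+1).

(* h(w) = w_n - w_{<n} U^-1 v, i.e. g + x v where x U = -b for w = (b | g);
   this is the map applied entrywise by hat_step. *)
Definition schur_entry (w : nat -> K) : K :=
  w n + ((- \row_(l < n) w l) *m invmx U *m v) 0 0.

Lemma schur_entry_ext (w w' : nat -> K) :
  (forall l, w l = w' l) -> schur_entry w = schur_entry w'.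
Proof.
move=> ew; rewrite /schur_entry ew; congr (_ + ((- _) *m _ *m _) 0 0).
by apply/matrixP => i l; rewrite !mxE ew.
Qed.

Lemma schur_entryZ (s : K) (w : nat -> K) :
  schur_entry (fun l => s * w l) = s * schur_entry w.
Proof.
rewrite /schur_entry.
have -> : \row_(l < n) (s * w l) = s *: \row_(l < n) w l.
  by apply/matrixP => i l; rewrite !mxE.
by rewrite -scalerN -!scalemxAl mxE mulrDr.
Qed.

Lemma schur_entry_eq0 (w : nat -> K) : (forall l, w l = 0) -> schur_entry w = 0.
Proof.
move=> w0; rewrite (@schur_entry_ext _ (fun l => 0 * w l)) ?schur_entryZ ?mul0r //.
by move=> l; rewrite w0 mul0r.
Qed.

Lemma unlift_max_widen (k : 'I_n) : unlift ord_max (widen_ord (leqnSn n) k) = Some k.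
Proof.
have -> : widen_ord (leqnSn n) k = lift ord_max k.
  by apply: val_inj; rewrite /= /bump leqNgt ltn_ord.
by rewrite liftK.
Qed.

(* Proof: left-multiplying by the
   unitriangular matrix E with last row (x | 1) clears the first n entries of
   the last row and turns its last entry into h(w). *)
Lemma det_bordered (w : nat -> K) : \det U != 0 ->
  detf n.+1 (fun r c => if (r < n)%N then N r c else w c) = \det U * schur_entry w.
Proof.
move=> detU_neq0.
set x : 'rV_n := - \row_(l < n) w l *m invmx U.
have xU : x *m U = - \row_(l < n) w l.
  by rewrite /x mulmxKV // unitmxE unitfE.
pose M := \matrix_(i < n.+1, l < n.+1) (if (i < n)%N then N i l else w l).
pose xe (l : 'I_n.+1) := if unlift ord_max l is Some l' then x 0 l' else 1.
pose E := \matrix_(i < n.+1, l < n.+1) (if (i < n)%N then (i == l)%:R else xe l).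
have detE : \det E = 1.
  rewrite det_trig; last first.
    apply/is_trig_mxP => i l lt_il; rewrite mxE.
    have -> : (i < n)%N by apply: leq_trans lt_il _; rewrite -ltnS.
    by case: eqP => // eil; rewrite eil ltnn in lt_il.
  apply: big1 => i _; rewrite mxE; case: ifP => ltin; first by rewrite eqxx.
  have -> : i = ord_max by apply: val_inj => /=; have := ltn_ord i; lia.
  by rewrite /xe unlift_none.
pose M' := \matrix_(i < n.+1, l < n.+1)
   (if (i < n)%N then N i l else if (l < n)%N then 0 else schur_entry w).
have EM : E *m M = M'.
  apply/matrixP => i l; rewrite !mxE; case: ifP => ltin.
    rewrite (bigD1 i) //= !mxE eqxx ltin mul1r big1 ?addr0 //.
    by move=> k nki; rewrite mxE ltin eq_sym (negbTE nki) mul0r.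
  rewrite big_ord_recr /= !mxE /= ltin ltnn /xe unlift_none mul1r.
  under eq_bigr => k _ do rewrite !mxE /= ltin /xe unlift_max_widen ltn_ord.
  case: ifP => ltln.
    have := congr1 (fun A : 'rV_n => A 0 (Ordinal ltln)) xU; rewrite !mxE /= => xUl.
    rewrite -[w l]opprK -xUl.
    rewrite [X in _ - X](eq_bigr (fun k : 'I_n => x 0 k * N k l)) ?subrr //.
    by move=> k _; rewrite [U _ _]mxE.
  have -> : (l : nat) = n by have := ltn_ord l; lia.
  rewrite /schur_entry addrC !mxE; congr (_ + _); apply: eq_bigr => k _.
  by rewrite [vcol_of _ _ _ _]mxE.
have -> : detf n.+1 (fun r c => if (r < n)%N then N r c else w c) = \det M'.
  by rewrite /detf -/M -EM det_mulmx detE mul1r.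
rewrite (expand_det_row _ ord_max) big_ord_recr /= big1; last first.
  by move=> k _; rewrite mxE /= ltnn ltn_ord mul0r.
rewrite add0r mxE /= ltnn /cofactor /= -signr_odd addnn odd_double expr0 mul1r mulrC.
congr (_ * _); congr (\det _); apply/matrixP => i l; rewrite !mxE.
by rewrite !lift_max ltn_ord.
Qed.

End BorderedDeterminant.

Section PolyDet.
Variable K : fieldType.
Implicit Types M N : nat -> nat -> K.

Lemma polydet_ext M M' nr nc j :
  (forall r c, M r c = M' r c) -> polydet M nr nc j = polydet M' nr nc j.
Proof.
move=> eM; apply/polyP => i; rewrite !coef_poly; case: ifP => // _.
by rewrite /detf; congr (\det _); apply/matrixP => r c; rewrite !mxE !eM.
Qed.

Lemma polydet_scale M (s : K) nr nc j :
  polydet (fun r c => s * M r c) nr nc j = s ^+ nc *: polydet M nr nc j.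
Proof.
apply/polyP => i; rewrite coefZ !coef_poly; case: ifP => _; last by rewrite mulr0.
rewrite /detf -detZ; congr (\det _); apply/matrixP => r c; rewrite !mxE.
by case: ifP.
Qed.

Lemma coef_polydet N n a i : \det (Umat_of N n.+1) != 0 -> (i <= a)%N ->
  (polydet N (n.+1 + a) n.+1 a)`_i =
    \det (Umat_of N n.+1) * schur_entry N n (N (n + a - i)%N).
Proof. by move=> detU_neq0 le_ia; rewrite coef_poly ltnS le_ia; exact: det_bordered. Qed.

(* Columns of the first block carry coefficients of P, columns of
   the second block carry those of P', whose factor (a + q' - p) is the one
   built into w_{p,q}; outside the bands both sides vanish. *)
Lemma subres_deriv_entry N n a j (C : K) :
  \det (Umat_of N n.+1) != 0 -> (0 < a)%N -> forall r c,
  let P := C *: polydet N (n.+1 + a) n.+1 a in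
  subres_fun P P^`() a a.-1 j r c = (C * \det (Umat_of N n.+1)) * hat_step N n.+1 a j r c.
Proof.
move=> detU_neq0 a_gt0 r c P.
rewrite /hat_step -/(schur_entry N n _) /subres_fun.
have w_out w : (forall l, w l = 0) -> 0 = C * \det (Umat_of N n.+1) * schur_entry N n w.
  by move=> w0; rewrite schur_entry_eq0 ?mulr0.
case: ifP => A_col.
  case: ifP => in_band; last by apply: w_out => l; rewrite /w_of !ifF //; lia.
  rewrite coefZ (coef_polydet detU_neq0); last lia.
  rewrite mulrA; congr (_ * _); apply: schur_entry_ext => l.
  by rewrite /w_of ifT; [congr N; lia | lia].
have [c' c_eq] : exists c', c = (c' + (a.-1 - j))%N by exists (c - (a.-1 - j))%N; lia.
subst c.
rewrite addnK.
case: ifP => B_col; last by apply: w_out => l; rewrite /w_of !ifF //; lia.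
case: ifP => in_band; last by apply: w_out => l; rewrite /w_of !ifF //; lia.
have [s r_eq] : exists s, r = (c' + s)%N by exists (r - c')%N; lia.
subst r.
rewrite addKn derivZ coefZ coef_deriv (coef_polydet detU_neq0); last lia.
rewrite [schur_entry _ _ (w_of _ _ _ _ _ _)]
  (@schur_entry_ext _ _ _ _ (fun l => (a - s)%:R * N (n + s)%N l)); last first.
  by move=> l; rewrite /w_of ifF ?ifT; [congr (_%:R * N _ l) | ..]; lia.
have -> : (a.-1 - s).+1 = (a - s)%N by lia.
have -> : (n + a - (a - s) = n + s)%N by lia.
by rewrite schur_entryZ mulr_natl !mulrnAr !mulrA.
Qed.

Lemma polydet_subres_deriv N J' a j (C : K) : (0 < J')%N -> (j < a.-1)%N ->
  \det (Umat_of N J') != 0 ->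
  let P := C *: polydet N (J' + a) J' a in
  polydet (subres_fun P P^`() a a.-1 j) (a + a.-1 - j) (a + a.-1 - 2 * j) j =
  (C * \det (Umat_of N J')) ^+ (2 * a - 2 * j - 1) *:
    polydet (hat_step N J' a j) (2 * a - j - 1) (2 * a - 2 * j - 1) j.
Proof.
case: J' => [//|n] _ lt_j_a detU_neq0 P.
have a_gt0 : (0 < a)%N by lia.
rewrite (polydet_ext _ _ _ (subres_deriv_entry j C detU_neq0 a_gt0)) polydet_scale.
by congr (_ ^+ _ *: polydet _ _ _ _); lia.
Qed.

End PolyDet.

Section NestedSubresultants.
Variables (K : fieldType) (F G : {poly K}) (js : nat -> nat).

Definition second_degree (k : nat) : nat :=
  if (k <= 1)%N then deg G else (js k.-1).-1.

Lemma hat_coef_at_jk k : (1 <= k)%N ->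
  (hatRk F G js k.-1 * hatBk F G js k.-1) ^+ colsH F G js k (js k)
    * hatBkj F G js k (js k) = hatRk F G js k * hatBk F G js k.
Proof. by case: k => [//|[|k]] _; rewrite /hatBk /hatBkj /= ?mul1r ?expr1n ?mulr1. Qed.

(* The bound j_k < n_2^{(k)}
   makes N^^{(k,j_k)} have j_k more rows than columns, as polydet_subres_deriv
   requires. *)
Lemma tS_hatS_succ k j (c : K) : (deg G <= deg F)%N ->
  (1 <= k)%N -> (js k < second_degree k)%N -> (j < (js k).-1)%N ->
  \det (Umat F G js k.+1) != 0 ->
  tS F G js k (js k) = c *: hatS F G js k (js k) ->
  tS F G js k.+1 j =
    (c * \det (Umat F G js k.+1)) ^+ colsH F G js k.+1 j *: hatS F G js k.+1 j.
Proof.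
case: k => [//|k] le_GF _ lt_jk lt_j detU_neq0 tS_k.
have [cols_gt0 rows_eq] : (0 < colsH F G js k.+1 (js k.+1))%N /\
    rowsH F G js k.+1 (js k.+1) = (colsH F G js k.+1 (js k.+1) + js k.+1)%N.
  by move: lt_jk; rewrite /second_degree /colsH /rowsH; case: (k) => [|k'] /=; lia.
rewrite /hatS rows_eq in tS_k.
have -> : tS F G js k.+2 j =
    polydet (subres_fun (tS F G js k.+1 (js k.+1)) (tS F G js k.+1 (js k.+1))^`()
               (js k.+1) (js k.+1).-1 j)
            (js k.+1 + (js k.+1).-1 - j) (js k.+1 + (js k.+1).-1 - 2 * j) j by [].
by rewrite tS_k; exact: polydet_subres_deriv.
Qed.

End NestedSubresultants.

Lemma PRS_last_lt (K : fieldType) (A B : {poly K}) P :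
  is_PRS A B P -> (3 <= size P)%N -> (deg (last 0%R P) < deg P`_1)%N.
Proof.
case=> _ _ [_ deg_decr] _ _ size_P.
have deg_lt i : (i.+2 < size P)%N -> (deg P`_i.+2 < deg P`_1)%N.
  elim: i => [|i IHi] lt_i; first exact: deg_decr.
  by apply: ltn_trans (IHi (ltnW lt_i)); exact: deg_decr.
rewrite -nth_last (_ : (size P).-1 = (size P - 3).+2); last lia.
by apply: deg_lt; lia.
Qed.

Lemma deg_deriv_le (K : fieldType) (p : {poly K}) : (deg p^`() <= (deg p).-1)%N.
Proof.
have [->|p_neq0] := eqVneq p 0; first by rewrite deriv0 /deg size_poly0.
by have := lt_size_deriv p_neq0; rewrite /deg; lia.
Qed.

(* In a complete recursive PRS, j_k < n_2^{(k)} for every non-final k: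
   the k-th PRS ends below its second polynomial, which is G for k = 1 and
   the derivative of P^{(k-1)}_{l_{k-1}} (degree at most j_{k-1} - 1) for
   k >= 2. *)
Lemma jseq_lt_n2 (K : fieldType) (F G : {poly K}) t Ps :
  is_complete_rec_PRS F G t Ps ->
  forall k, (1 <= k < t)%N -> (jseq F Ps k < n2 F G Ps k)%N.
Proof.
case=> _ [PRS_k [_ P1_1]] link nonconst _ k k_range.
have [_ size_Pk] := nonconst k k_range.
have PRS_Pk : is_PRS (Ps k)`_0 (Ps k)`_1 (Ps k) by apply: PRS_k; lia.
have := PRS_last_lt PRS_Pk size_Pk; rewrite /jseq /n2.
case: k k_range {PRS_Pk size_Pk} => [|[|k]] k_range //=; first by rewrite P1_1.
have [P0_eq P1_eq] : (Ps k.+2)`_0 = last 0 (Ps k.+1) /\ (Ps k.+2)`_1 = ((Ps k.+2)`_0)^`().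
  by apply: link; lia.
rewrite P1_eq P0_eq => lt_last.
exact: leq_trans lt_last (deg_deriv_le _).
Qed.

Theorem mainTheorem8 (K : fieldType) (F G : {poly K}) (t : nat)
  (Ps : nat -> seq {poly K}) :
  [pchar K] =i pred0 ->
  F != 0 -> G != 0 -> (0 < deg G)%N -> (deg G < deg F)%N ->
  is_complete_rec_PRS F G t Ps ->
  (forall k, (2 <= k <= t)%N -> \det (Umat F G (jseq F Ps) k) != 0) ->
  forall k j, (1 <= k <= t)%N -> (j < n2 F G Ps k)%N ->
    tS F G (jseq F Ps) k j =
      ((hatRk F G (jseq F Ps) k.-1 * hatBk F G (jseq F Ps) k.-1)
         ^+ colsH F G (jseq F Ps) k j * hatBkj F G (jseq F Ps) k j)
      *: hatS F G (jseq F Ps) k j.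
Proof.
move=> _ _ _ _ lt_GF recPRS detU_neq0 k; elim: k => [//|k IH] j k_range lt_j.
case: k IH k_range lt_j => [|k] IH k_range lt_j.
  (* k = 1: both sides are the subresultant polynomial of (F, G). *)
  by rewrite /hatBk /hatBkj /= mul1r expr1n mulr1 scale1r.
have lt_jk : (jseq F Ps k.+1 < n2 F G Ps k.+1)%N by apply: jseq_lt_n2 recPRS _ _; lia.
have k_range' : (1 <= k.+1 <= t)%N by lia.
have := IH (jseq F Ps k.+1) k_range' lt_jk.
rewrite hat_coef_at_jk // => tS_k.
have detU_k : \det (Umat F G (jseq F Ps) k.+2) != 0 by apply: detU_neq0; lia.
by rewrite (tS_hatS_succ (ltnW lt_GF) (ltn0Sn k) lt_jk lt_j detU_k tS_k) exprMn.
Qed.
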